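(* Let $G$ be a compact group with Haar probability measure $\lambda$, let $\mathcal E$ be a finite partition of $G$ into Borel sets and let $y\in G$. Define, for $D\in Bor(G\times G)$, $$\nu_{y,\mathcal E}(D)=\sum_{E\in\mathcal E^\ast}\frac{\lambda_2\big(D\cap(E\times(E\oplus y))\big)}{\lambda(E)}.$$ Then $\nu_{y,\mathcal E}\in P(G\times G)$ and $\nu_{y,\mathcal E}(B\times G)=\nu_{y,\mathcal E}(G\times B)=\lambda(B)$ for every Borel set $B\subseteq G$.
   Context: $G=(G,\oplus)$ is a compact Hausdorff group (written additively but not necessarily commutative), $\lambda$ its (two-sided invariant) Haar probability measure, and $E\oplus y=\{e\oplus y: e\in E\}$. $\lambda_2$ is the product measure $\lambda\otimes\lambda$ on $G\times G$, extended uniquely to a regular Borel probability measure. $\mathcal E^\ast$ is the set of $E\in\mathcal E$ with $\lambda(E)>0$. $P(X)$ denotes the set of regular Borel probability measures on a compact space $X$. *)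

From HB Require Import structures.
From mathcomp Require Import all_boot all_order all_algebra.
From mathcomp Require Import all_classical all_reals all_analysis.
Set Implicit Arguments. Unset Strict Implicit. Unset Printing Implicit Defensive.
Import Order.TTheory GRing.Theory Num.Theory.
Local Open Scope classical_set_scope.
Local Open Scope ring_scope.

Notation borelT T := (g_sigma_algebraType (@open T)).

Definition regular_measure (R : realType) (T : topologicalType)
  (mu : set T -> \bar R) : Prop :=
  forall D : set T, <<s (@open T) >> D ->
    mu D = ereal_sup [set mu K | K in [set K : set T | compact K /\ K `<=` D]]
    /\ mu D = ereal_inf [set mu U | U in [set U : set T | open U /\ D `<=` U]].

Definition compact_group (G : ptopologicalType)
  (add : G -> G -> G) (opp : G -> G) (zero : G) : Prop :=
  [/\ associative add /\ left_id zero add /\ right_id zero add,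
      (forall x, add (opp x) x = zero) /\ (forall x, add x (opp x) = zero),
      continuous (fun p : G * G => add p.1 p.2) /\ continuous opp,
      hausdorff_space G & compact [set: G]].

Definition haar_prob (R : realType) (G : ptopologicalType)
  (add : G -> G -> G) (lam : probability (borelT G) R) : Prop :=
  regular_measure (fun A : set G => lam A) /\
  forall (A : set (borelT G)) (x : G), measurable A ->
    lam [set add x a | a in A] = lam A /\ lam [set add a x | a in A] = lam A.

Definition haar_prod (R : realType) (G : ptopologicalType)
  (lam : probability (borelT G) R) (lam2 : probability (borelT (G * G)%type) R) : Prop :=
  regular_measure (fun D : set (G * G) => lam2 D) /\
  forall (A B : set (borelT G)), measurable A -> measurable B ->
    lam2 (A `*` B) = (lam A * lam B)%E.

Definition borel_partition (G : ptopologicalType) (n : nat) (E : 'I_n -> set (borelT G)) : Prop :=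
  (forall i, measurable (E i)) /\
  (forall i j, i != j -> E i `&` E j = set0) /\
  \bigcup_(i in [set: 'I_n]) E i = [set: G].

Definition nu_yE (R : realType) (G : ptopologicalType) (add : G -> G -> G)
  (lam : probability (borelT G) R) (lam2 : probability (borelT (G * G)%type) R)
  (n : nat) (E : 'I_n -> set (borelT G)) (y : G) (D : set (borelT (G * G)%type)) : \bar R :=
  (\sum_(i < n | (0 < lam (E i))%E)
     (lam2 (D `&` (E i `*` [set add e y | e in E i])) * ((fine (lam (E i)))^-1)%:E))%E.

From HB Require Import structures.
From mathcomp Require Import all_boot all_order all_algebra.
From mathcomp Require Import all_classical all_reals all_analysis.
From mathcomp Require Import lra.
Import Order.TTheory GRing.Theory Num.Theory.
Local Open Scope classical_set_scope.
Local Open Scope ring_scope.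
Set Implicit Arguments. Unset Strict Implicit. Unset Printing Implicit Defensive.

(* ν is a finite nonnegative combination of restrictions of λ₂ to the
   rectangles E × (E ⊕ y), hence a measure with ν ≤ c·λ₂ for a constant c.
   Such domination transfers regularity from λ₂: if K ⊆ D ⊆ V with λ₂(D∖K)
   and λ₂(V∖D) small, then so are ν(D∖K) and ν(V∖D).  For the marginals,
   split B along the partition ℰ (resp. its translate ℰ ⊕ y):
   λ₂((B ∩ E) × (E ⊕ y)) = λ(B ∩ E) λ(E) by right invariance, and the factor
   λ(E) cancels.  Taking B = G gives total mass 1, so ν is a probability. *)

Lemma continuous_fst (T U : topologicalType) : continuous (@fst T U).
Proof. by move=> p; exact: cvg_fst. Qed.

Lemma continuous_snd (T U : topologicalType) : continuous (@snd T U).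
Proof. by move=> p; exact: cvg_snd. Qed.

Lemma cluster_continuous (T U : topologicalType) (f : T -> U) (p q : T) :
  continuous f -> cluster (nbhs p) q -> cluster (nbhs (f p)) (f q).
Proof.
move=> cf cl A B nA nB; have [x [Ax Bx]] := cl _ _ (cf p _ nA) (cf q _ nB).
by exists (f x).
Qed.

Lemma hausdorff_prod (T U : topologicalType) :
  hausdorff_space T -> hausdorff_space U -> hausdorff_space (T * U)%type.
Proof.
move=> hT hU p q cl.
have cl1 := @cluster_continuous _ _ fst p q (@continuous_fst _ _) cl.
have cl2 := @cluster_continuous _ _ snd p q (@continuous_snd _ _) cl.
by rewrite [p]surjective_pairing [q]surjective_pairing (hT _ _ cl1) (hU _ _ cl2).
Qed.

Lemma borel_preimage_continuous (T U : topologicalType) (f : T -> U) :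
  continuous f -> forall B, <<s (@open U) >> B -> <<s (@open T) >> (f @^-1` B).
Proof.
move=> cf B mB.
have := @smallest_sub _ (sigma_algebra setT) (@open U)
  (image_set_system setT f <<s (@open T)>>).
move=> /(_ _ _ B mB); rewrite /image_set_system /= setTI; apply.
  by apply: sigma_algebra_image; exact: smallest_sigma_algebra.
move=> A oA /=; rewrite setTI; apply: sub_sigma_algebra.
by move/continuousP : cf; apply.
Qed.

Lemma borel_setX (T U : ptopologicalType) (A : set (borelT T)) (B : set (borelT U)) :
  measurable A -> measurable B -> measurable (A `*` B : set (borelT (T * U)%type)).
Proof.
move=> mA mB; rewrite -[A `*` B]/(fst @^-1` A `&` snd @^-1` B).
apply: measurableI.
  exact: (borel_preimage_continuous (@continuous_fst T U)).
exact: (borel_preimage_continuous (@continuous_snd T U)).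
Qed.

Lemma borel_compact (T : topologicalType) (K : set T) :
  hausdorff_space T -> compact K -> <<s (@open T) >> K.
Proof.
move=> hT cK; rewrite -(setCK K) -setTD; apply: sigma_algebraCD.
by apply: sub_sigma_algebra; apply: closed_openC; exact: compact_closed.
Qed.

Section dominated_measure.
Local Open Scope ereal_scope.
Context d (T : measurableType d) (R : realType).
Variables (mu nu : {finite_measure set T -> \bar R}) (c : R).
Hypothesis c_ge0 : (0 <= c)%R.
Hypothesis nu_le : forall Z, measurable Z -> nu Z <= c%:E * mu Z.

Lemma dominated_measureD (A B : set T) : measurable A -> measurable B ->
  A `<=` B -> nu B <= nu A + c%:E * (mu B - mu A).
Proof.
move=> mA mB AB.
have BA : B `&` A = A by apply/setIidr.
rewrite [in X in X <= _](measureDI nu mB mA) BA addeC leeD2l//.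
have -> : mu A = mu (B `&` A) by rewrite BA.
by rewrite -measureD ?nu_le ?ltey_eq ?fin_num_measure//; exact: measurableD.
Qed.

Lemma dominated_measureD_lt (A B : set T) (e : R) : measurable A -> measurable B ->
  A `<=` B -> (0 < e)%R -> mu B < mu A + (e / (c + 1))%:E -> nu B <= nu A + e%:E.
Proof.
move=> mA mB AB e0 muAB; apply: le_trans (dominated_measureD mA mB AB) _.
rewrite leeD2l//.
rewrite -(fineK (fin_num_measure mu _ mA)) -(fineK (fin_num_measure mu _ mB)) in muAB *.
rewrite -EFinD lte_fin in muAB; rewrite -EFinB -EFinM lee_fin.
have : (c * (fine (mu B) - fine (mu A)) <= c * (e / (c + 1)))%R.
  by apply: ler_wpM2l => //; lra.
have : (c * (e / (c + 1)) <= e)%R.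
  by rewrite mulrA ler_pdivrMr ?ltr_wpDl// mulrDr mulr1 mulrC lerDl ltW.
lra.
Qed.

Lemma dominated_ereal_sup (S : set (set T)) (D : set T) : measurable D ->
  (forall K, S K -> measurable K /\ K `<=` D) ->
  mu D = ereal_sup (mu @` S) -> nu D = ereal_sup (nu @` S).
Proof.
move=> mD SD muD; apply/eqP; rewrite eq_le; apply/andP; split; last first.
  by apply: ge_ereal_sup => _ [K /SD[mK KD] <-]; rewrite le_measure ?inE.
apply/lee_addgt0Pr => e e0.
have e'0 : (0 < e / (c + 1))%R by rewrite divr_gt0// ltr_wpDl.
have supfin : ereal_sup (mu @` S) \is a fin_num by rewrite -muD fin_num_measure.
have [_ [K SK <-]] := ub_ereal_sup_adherent e'0 supfin.
have [mK KD] := SD K SK; rewrite -muD => muK.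
have nuK : nu K <= ereal_sup (nu @` S) by apply: ereal_sup_ubound; exists K.
apply: le_trans (leeD2r _ nuK).
apply: dominated_measureD_lt => //.
by rewrite -lteBlDr ?fin_num_measure.
Qed.

Lemma dominated_ereal_inf (S : set (set T)) (D : set T) : measurable D ->
  (forall V, S V -> measurable V /\ D `<=` V) ->
  mu D = ereal_inf (mu @` S) -> nu D = ereal_inf (nu @` S).
Proof.
move=> mD SD muD; apply/eqP; rewrite eq_le; apply/andP; split.
  by apply: le_ereal_inf_tmp => _ [V /SD[mV DV] <-]; rewrite le_measure ?inE.
apply/lee_addgt0Pr => e e0.
have e'0 : (0 < e / (c + 1))%R by rewrite divr_gt0// ltr_wpDl.
have inffin : ereal_inf (mu @` S) \is a fin_num by rewrite -muD fin_num_measure.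
have [_ [V SV <-]] := lb_ereal_inf_adherent e'0 inffin.
have [mV DV] := SD V SV; rewrite -muD => muV.
have nuV : ereal_inf (nu @` S) <= nu V by apply: ereal_inf_lbound; exists V.
by apply: le_trans nuV (dominated_measureD_lt _ _ _ _ _).
Qed.
End dominated_measure.

Lemma regular_measure_dominated (R : realType) (T U : ptopologicalType)
    (mu nu : {finite_measure set (borelT (T * U)%type) -> \bar R}) (c : R) :
  hausdorff_space T -> hausdorff_space U -> 0 <= c ->
  (forall Z, measurable Z -> (nu Z <= c%:E * mu Z)%E) ->
  regular_measure (fun D : set (T * U) => mu D) ->
  regular_measure (fun D : set (T * U) => nu D).
Proof.
move=> hT hU c0 nu_le mu_reg D mD; have [mu_inner mu_outer] := mu_reg D mD.
split.
- apply: (dominated_ereal_sup c0 nu_le mD _ mu_inner) => K [cK KD]; split => //.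
  exact: borel_compact (hausdorff_prod hT hU) cK.
- apply: (dominated_ereal_inf c0 nu_le mD _ mu_outer) => V [oV DV]; split => //.
  exact: sub_sigma_algebra.
Qed.

Lemma measure_partition (R : realType) d (T : measurableType d)
    (mu : {measure set T -> \bar R}) n (F : 'I_n -> set T) :
  (forall i, measurable (F i)) -> (forall i j, i != j -> F i `&` F j = set0) ->
  \bigcup_(i in [set: 'I_n]) F i = [set: T] ->
  forall B, measurable B -> mu B = (\sum_(i < n) mu (B `&` F i))%E.
Proof.
move=> mF dF cF B mB.
have UB : \big[setU/set0]_(i < n) (B `&` F i) = B.
  apply/seteqP; split.
    by elim/big_ind: _ => [x []|X Y XB YB x [/XB|/YB]|i _ x []].
  move=> x Bx; have : [set: T] x by [].
  rewrite -cF => -[i _ Fix].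
  by rewrite (bigD1 i) //=; left.
rewrite -[in LHS]UB measure_semi_additive_ord ?UB// => [i|].
  exact: measurableI.
move=> i j _ _ [x [[_ Fix] [_ Fjx]]]; apply/eqP/negPn/negP => /dF ij.
by have : (F i `&` F j) x by []; rewrite ij.
Qed.

Section weighted_restrictions.
Local Open Scope ereal_scope.
Context d (T : measurableType d) (R : realType).
Variables (mu : {measure set T -> \bar R}) (n : nat) (A : 'I_n -> set T).
Variables (mA : forall i, measurable (A i)) (w : 'I_n -> {nonneg R}).

Definition mrestr_sum := msum (fun k =>
  if insub k is Some i then mscale (w i) (mrestr mu (mA i)) else mzero) n.

Lemma mrestr_sumE D : mrestr_sum D = \sum_(i < n) (w i)%:num%:E * mu (D `&` A i).
Proof. by apply: eq_bigr => i _; rewrite valK. Qed.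

Lemma mrestr_sum_le D : measurable D ->
  mrestr_sum D <= (\sum_(i < n) (w i)%:num)%:E * mu D.
Proof.
move=> mD; rewrite mrestr_sumE -sumEFin ge0_sume_distrl => [|i _]; last first.
  by rewrite lee_fin.
apply: lee_sum => i _; apply: lee_wpmul2l; first by rewrite lee_fin.
by apply: le_measure; rewrite ?inE//; exact: measurableI.
Qed.

End weighted_restrictions.

Lemma mnormalize_setT1 d (T : measurableType d) (R : realType)
    (mu : {measure set T -> \bar R}) (P : probability T R) :
  mu [set: T] = 1%E -> mnormalize mu P = mu.
Proof.
by move=> mu1; apply/funext => A; rewrite /mnormalize mu1 onee_eq0 /= invr1 mule1.
Qed.

Lemma image_addr_preimage (G : Type) (add : G -> G -> G) (opp : G -> G) (zero : G) :
  associative add -> right_id zero add ->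
  (forall x, add (opp x) x = zero) -> (forall x, add x (opp x) = zero) ->
  forall (A : set G) (y : G), [set add a y | a in A] = (add^~ (opp y)) @^-1` A.
Proof.
move=> addA addr0 addNr addrN A y; apply/seteqP; split => [_ [a Aa <-]|x /= Ax].
  by rewrite /= -addA addrN addr0.
by exists (add x (opp y)) => //; rewrite -addA addNr addr0.
Qed.

Lemma measure_fineVK (R : realType) d (T : measurableType d)
    (mu : {measure set T -> \bar R}) (X A : set T) :
  measurable X -> measurable A -> X `<=` A -> mu A \is a fin_num ->
  (mu X * mu A * ((fine (mu A))^-1)%:E = mu X)%E.
Proof.
move=> mX mA XA finA; have [A0|A0] := eqVneq (mu A) 0%E.
  by rewrite (subset_measure0 mX mA XA A0) !mul0e.
rewrite -(fineK finA) -muleA -EFinM divff ?mule1//.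
by apply: contra_neq A0; rewrite -{2}(fineK finA) => ->.
Qed.

Section nu_yE_properties.
Context (R : realType) (G : ptopologicalType).
Variables (add : G -> G -> G) (opp : G -> G) (zero : G).
Variables (lam : probability (borelT G) R) (lam2 : probability (borelT (G * G)%type) R).
Variables (n : nat) (E : 'I_n -> set (borelT G)) (y : G).
Hypotheses (HG : compact_group add opp zero) (Hlam : haar_prob add lam).
Hypotheses (Hlam2 : haar_prod lam lam2) (HE : borel_partition E).

Local Notation "A +y" := ([set add a y | a in A] : set (borelT G))
  (at level 2, format "A  +y").

Lemma translate_preimage (A : set (borelT G)) : A +y = (add^~ (opp y)) @^-1` A.
Proof.
case: HG => -[addA [_ addr0]] [addNr addrN] _ _ _.
exact: (image_addr_preimage addA addr0 addNr addrN).
Qed.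

Lemma measurable_translate (A : set (borelT G)) : measurable A -> measurable (A +y).
Proof.
case: HG => _ _ [cadd _] _ _ mA; rewrite translate_preimage.
apply: (borel_preimage_continuous _ mA) => x.
apply: (continuous_comp (f := fun x : G => (x, opp y))
  (g := fun p : G * G => add p.1 p.2)).
  by apply: cvg_pair => /=; [exact: cvg_id | exact: cvg_cst].
exact: cadd.
Qed.

Lemma translate_partition : borel_partition (fun i => (E i) +y).
Proof.
case: HE => mE [dE cE]; split; first by move=> i; exact: measurable_translate.
split=> [i j ij|].
  by rewrite !translate_preimage -preimage_setI (dE _ _ ij) preimage_set0.
by under eq_bigcupr do rewrite translate_preimage; rewrite -preimage_bigcup cE.
Qed.

Let measurable_cell i : measurable (E i `*` (E i) +y : set (borelT (G * G)%type)).
Proof.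
by case: HE => mE _; apply: borel_setX; [exact: mE | exact: measurable_translate].
Qed.

Let weight_ge0 i : 0 <= (fine (lam (E i)))^-1.
Proof. by rewrite invr_ge0 fine_ge0. Qed.

Let weight i : {nonneg R} := NngNum (weight_ge0 i).

(* The restriction to E^* can be dropped: for a null cell, (fine 0)^-1 = 0. *)
Lemma nu_yE_sum D : nu_yE add lam lam2 E y D =
  (\sum_(i < n) lam2 (D `&` (E i `*` (E i) +y)) * ((fine (lam (E i)))^-1)%:E)%E.
Proof.
rewrite /nu_yE big_mkcond; apply: eq_bigr => i _; case: ifPn => //.
by rewrite lt0e measure_ge0 andbT negbK => /eqP ->; rewrite /= invr0 mule0.
Qed.

Lemma nu_yE_mrestr_sum D :
  nu_yE add lam lam2 E y D = mrestr_sum lam2 measurable_cell weight D.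
Proof. by rewrite nu_yE_sum mrestr_sumE; apply: eq_bigr => i _; rewrite muleC. Qed.

Lemma nu_yE_setXT (B : set (borelT G)) : measurable B ->
  nu_yE add lam lam2 E y (B `*` [set: G]) = lam B.
Proof.
case: HE => mE [dE cE] mB; case: Hlam => _ lam_inv; case: Hlam2 => _ lam2_prod.
rewrite nu_yE_sum (measure_partition lam mE dE cE mB).
apply: eq_bigr => i _.
have -> : (B `*` [set: G]) `&` (E i `*` (E i) +y) = (B `&` E i) `*` (E i) +y.
  by apply/seteqP; split => -[a b] /=; tauto.
have mBE : measurable (B `&` E i) by exact: measurableI.
rewrite lam2_prod ?(lam_inv _ _ (mE i)).2 ?measure_fineVK ?fin_num_measure//.
exact: measurable_translate.
Qed.

Lemma nu_yE_setTX (B : set (borelT G)) : measurable B ->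
  nu_yE add lam lam2 E y ([set: G] `*` B) = lam B.
Proof.
case: translate_partition => mEy [dEy cEy] mB.
case: HE => mE _; case: Hlam => _ lam_inv; case: Hlam2 => _ lam2_prod.
rewrite nu_yE_sum (measure_partition lam mEy dEy cEy mB).
apply: eq_bigr => i _.
have -> : ([set: G] `*` B) `&` (E i `*` (E i) +y) = E i `*` (B `&` (E i) +y).
  by apply/seteqP; split => -[a b] /=; tauto.
have mBEy : measurable (B `&` (E i) +y) by exact: measurableI.
rewrite lam2_prod// -(lam_inv _ y (mE i)).2 (muleC (lam _)).
by rewrite measure_fineVK ?fin_num_measure.
Qed.

Lemma nu_yE_regular_probability :
  exists P : probability (borelT (G * G)%type) R,
    regular_measure (fun D : set (G * G) => P D) /\
    forall D, measurable D -> P D = nu_yE add lam lam2 E y D.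
Proof.
pose m := mrestr_sum lam2 measurable_cell weight.
have m_setT : m [set: G * G] = 1%E.
  by rewrite /m -nu_yE_mrestr_sum -setXTT nu_yE_setXT ?probability_setT.
have mE D : mnormalize m lam2 D = m D by rewrite mnormalize_setT1.
exists (mnormalize m lam2); split => [|D _]; last first.
  by rewrite nu_yE_mrestr_sum; exact: mE.
case: HG => _ _ _ hG _; case: Hlam2 => lam2_reg _.
apply: (@regular_measure_dominated R G G lam2 (mnormalize m lam2)
  (\sum_(i < n) (weight i)%:num) hG hG _ _ lam2_reg) => [|Z mZ].
  exact: (sumr_ge0 _ (fun i _ => weight_ge0 i)).
by rewrite /= mE; exact: mrestr_sum_le.
Qed.

End nu_yE_properties.

Theorem lemma3p2 (R : realType) (G : ptopologicalType)
  (add : G -> G -> G) (opp : G -> G) (zero : G)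
  (lam : probability (borelT G) R) (lam2 : probability (borelT (G * G)%type) R)
  (n : nat) (E : 'I_n -> set (borelT G)) (y : G) :
  compact_group add opp zero ->
  haar_prob add lam ->
  haar_prod lam lam2 ->
  borel_partition E ->
  (exists P : probability (borelT (G * G)%type) R,
     regular_measure (fun D : set (G * G) => P D) /\
     forall D : set (borelT (G * G)%type), measurable D -> P D = nu_yE add lam lam2 E y D)
  /\ forall B : set (borelT G), measurable B ->
       nu_yE add lam lam2 E y (B `*` [set: G]) = lam B /\
       nu_yE add lam lam2 E y ([set: G] `*` B) = lam B.
Proof.
move=> HG Hlam Hlam2 HE; split.
  exact: nu_yE_regular_probability y HG Hlam Hlam2 HE.
move=> B mB; split.
- exact (nu_yE_setXT y HG Hlam Hlam2 HE mB).
- exact (nu_yE_setTX y HG Hlam Hlam2 HE mB).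
Qed.
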